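(* Let $G$ be an $(N,k)$ Adinkra obtained from an $N$-cube Adinkra by quotienting by a doubly even $(N,k)$ code $C$ (vertices labeled by cosets $x+C$), with the matrices $\gamma_i$ defined as in the context. Let $M=\gamma_{i_1}\cdots\gamma_{i_t}$ and let $p\in\mathbb{Z}_2^N$ be the vector with $p_i=1$ exactly for the colors $i$ occurring an odd number of times in $(i_1,\dots,i_t)$. Suppose $p$ is a nonzero codeword of $C$ and $M_{x,x}=\pm1$ for all vertices $x$. Then for any two vertices $x+C$ and $y+C$, $M_{x+C,x+C}=M_{y+C,y+C}$ if and only if $\langle x,p\rangle\equiv\langle y,p\rangle\pmod 2$.
   Context: An Adinkra of dimension $N$ is a finite connected simple graph $G=(V,E)$ with: a bipartition of $V$ into bosons and fermions (every edge joins a boson and a fermion); a height function (irrelevant here); a coloring of $E$ by colors $\{1,\dots,N\}$ such that each vertex is incident to exactly one edge of each color; an edge parity $\pi:E\to\mathbb{Z}_2$ (parity $1$ = dashed); such that every path with edge colors $(i,j)$, $i\ne j$, lies in a unique 4-cycle with colors $(i,j,i,j)$, each having an odd number of dashed edges. If $|V|=2^{N-k}$, $G$ is an $(N,k)$ Adinkra; it has $n=2^{N-k-1}$ bosons $b_1,\dots,b_n$ and $n$ fermions $f_1,\dots,f_n$. A doubly even $(N,k)$ code $C$ is a $k$-dimensional subspace of $\mathbb{Z}_2^N$ all of whose elements have weight $\equiv0\pmod4$; $\langle u,v\rangle=\sum_iu_iv_i\bmod2$, and $\langle x,c\rangle$ for $c\in C$ depends only on $x+C$. Quotient construction: label the vertices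 of an $N$-cube Adinkra by $\mathbb{Z}_2^N$ so that color-$i$ edges join $v$ and $v+e_i$, and identify vertices whose labels differ by elements of $C$; the result has vertices $x+C$ and color-$i$ edges joining $x+C$ and $x+e_i+C$. For each color $i$, $L_i$ is the $n\times n$ matrix with $(L_i)_{r,s}=+1$ if $b_r,f_s$ are joined by a solid edge of color $i$, $-1$ if joined by a dashed edge of color $i$, $0$ otherwise; $\gamma_i=\begin{pmatrix}0&L_i\\ L_i^{T}&0\end{pmatrix}$, rows and columns indexed by $V$. *)

From mathcomp Require Import all_boot all_order all_algebra.
Set Implicit Arguments. Unset Strict Implicit. Unset Printing Implicit Defensive.
Import GRing.Theory.
Local Open Scope ring_scope.

Notation word N := 'rV['F_2]_N.

Definition ebasis (N : nat) (i : 'I_N) : word N := delta_mx 0 i.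

Definition wt (N : nat) (c : word N) : nat := #|[set i : 'I_N | c 0 i != 0]|.

Definition ip (N : nat) (u v : word N) : 'F_2 := \sum_(i < N) u 0 i * v 0 i.

(* A doubly even (N,k) code: a k-dimensional F_2-subspace of Z_2^N
   (over F_2: contains 0, closed under +, 2^k elements) all of whose
   elements have weight divisible by 4. *)
Definition doubly_even_code (N k : nat) (C : {set word N}) : Prop :=
  [/\ 0 \in C, {in C &, forall a b, a + b \in C}, #|C| = (2 ^ k)%N
    & {in C, forall c, (4 %| wt c)%N}].

Definition coset (N : nat) (C : {set word N}) (x : word N) : {set word N} :=
  [set x + c | c in C].

Definition qvert (N : nat) (C : {set word N}) : finType :=
  {A : {set word N} | [exists x, A == coset C x]}.

Lemma coset_is_coset (N : nat) (C : {set word N}) (x : word N) :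
  [exists y, coset C x == coset C y].
Proof. by apply/existsP; exists x. Qed.

Definition cos (N : nat) (C : {set word N}) (x : word N) : qvert C :=
  exist _ (coset C x) (coset_is_coset C x).

(* A dashing of the quotient graph (color-i edges join x+C and x+e_i+C):
   d u i = true iff the color-i edge at vertex u is dashed (parity 1).
   It is a dashing of edges (both endpoints agree), and satisfies the
   Adinkra condition: every (i,j,i,j) 4-cycle, i <> j, has an odd number
   of dashed edges. *)
Definition adinkra_dashing (N : nat) (C : {set word N})
    (d : qvert C -> 'I_N -> bool) : Prop :=
  (forall x i, d (cos C x) i = d (cos C (x + ebasis i)) i) /\
  (forall x i j, i != j ->
     d (cos C x) i (+) d (cos C (x + ebasis i)) j
       (+) d (cos C (x + ebasis j)) i (+) d (cos C x) j = true).

Definition vmx (V : finType) := V -> V -> int.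
Definition vmx_mul (V : finType) (A B : vmx V) : vmx V :=
  fun u v => \sum_(w : V) A u w * B w v.
Definition vmx_one (V : finType) : vmx V := fun u v => (u == v)%:R.

(* gamma_i: entry (u,v) is +1 / -1 if u,v are joined by a solid / dashed
   color-i edge, and 0 otherwise (this is [[0,L_i],[L_i^T,0]] indexed by V). *)
Definition gamma (N : nat) (C : {set word N}) (d : qvert C -> 'I_N -> bool)
    (i : 'I_N) : vmx (qvert C) :=
  fun u v => if val v == [set a + ebasis i | a in val u]
             then (if d u i then -1 else 1) else 0.

Definition gprod (N : nat) (C : {set word N}) (d : qvert C -> 'I_N -> bool)
    (s : seq 'I_N) : vmx (qvert C) :=
  foldr (fun i A => vmx_mul (gamma d i) A) (@vmx_one (qvert C)) s.

Definition parity_word (N : nat) (s : seq 'I_N) : word N :=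
  \row_(i < N) ((odd (count_mem i s))%:R : 'F_2).

From mathcomp Require Import all_boot all_order all_algebra.
From mathcomp Require Import ring.
Set Implicit Arguments. Unset Strict Implicit. Unset Printing Implicit Defensive.
Import GRing.Theory.
Local Open Scope ring_scope.

(* When p lies in C the walk from x + C along the colours of s is closed, and
   M_{x+C,x+C} is (-1)^(number of dashed edges on it).  Moving the start by
   e_j changes that number, mod 2, by |s| + #{occurrences of j in s}: at each
   step the 4-cycle condition contributes (i <> j), and the two colour-j edges
   joining the walks at their ends coincide because both walks are closed.
   As |s| = wt p mod 2 is even, the change is p_j, so the dash parity from
   x + C is that from C plus <x,p>. *)

Lemma F2_cases (a : 'F_2) : a = 0 \/ a = 1.
Proof. by case: a => [[|[|n]]] //= ?; [left | right]; apply: val_inj. Qed.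

Lemma natr_negb_F2 (b : bool) : (~~ b)%:R = 1 + b%:R :> 'F_2.
Proof. by case: b; apply: val_inj. Qed.

Lemma natr_F2 (n : nat) : n%:R = (odd n)%:R :> 'F_2.
Proof. by elim: n => // n IH; rewrite -nat1r IH /= natr_negb_F2. Qed.

Lemma addrr_F2 (a : 'F_2) : a + a = 0.
Proof. by rewrite addrr_pchar2 // pchar_Fp. Qed.

Lemma F2_eq_add2r (x y a : 'F_2) : x = y + (a + a) -> x = y.
Proof. by rewrite addrr_F2 addr0. Qed.

Lemma addrr_rowF2 (N : nat) (v : 'rV['F_2]_N) : v + v = 0.
Proof. by apply/rowP => j; rewrite !mxE addrr_F2. Qed.

Definition signF2 (a : 'F_2) : int := (-1) ^+ a.

Lemma signF2_nat (b : bool) : signF2 b%:R = if b then -1 else 1.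
Proof. by case: b. Qed.

Lemma signF2D (a b : 'F_2) : signF2 (a + b) = signF2 a * signF2 b.
Proof. by case: (F2_cases a) => ->; case: (F2_cases b) => ->. Qed.

Lemma signF2_inj : injective signF2.
Proof. by move=> a b; case: (F2_cases a) => ->; case: (F2_cases b) => ->. Qed.

Section Walks.
Variables (N : nat) (C : {set word N}) (d : qvert C -> 'I_N -> bool).

Fixpoint walk_dashes (x : word N) (s : seq 'I_N) : 'F_2 :=
  if s is i :: s' then (d (cos C x) i)%:R + walk_dashes (x + ebasis i) s'
  else 0.

Lemma coset_shift (x e : word N) :
  [set a + e | a in coset C x] = coset C (x + e).
Proof.
by rewrite /coset -imset_comp; apply: eq_imset => c /=; rewrite addrAC.
Qed.

Lemma gprod_cosE (s : seq 'I_N) (x : word N) (v : qvert C) :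
  gprod d s (cos C x) v =
  if val v == coset C (x + \sum_(i <- s) ebasis i)
  then signF2 (walk_dashes x s) else 0.
Proof.
elim: s x => [|i s IH] x /=.
  rewrite big_nil addr0 /vmx_one eq_sym -val_eqE /=.
  by case: (_ == _).
rewrite /vmx_mul (bigD1 (cos C (x + ebasis i))) //= big1 => [|w /eqP ne_w].
  rewrite addr0 /gamma /= coset_shift eqxx IH big_cons addrA signF2D signF2_nat.
  by case: (_ == _); rewrite ?mulr0.
rewrite /gamma /= coset_shift; case: eqP => [w_eq | _]; last by rewrite mul0r.
by case: ne_w; apply: val_inj.
Qed.

Hypothesis dashing : adinkra_dashing d.

Lemma dashing_square (x : word N) (i j : 'I_N) :
  (d (cos C (x + ebasis j)) i)%:R =
  (d (cos C x) i)%:R + (d (cos C x) j)%:R + (d (cos C (x + ebasis i)) j)%:R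
    + (i != j)%:R :> 'F_2.
Proof.
case: dashing => edge square; case: (eqVneq i j) => [<- | ne_ij].
  by rewrite -edge addr0 addrr_F2 add0r.
move: (square x i j ne_ij) => /=.
case: (d (cos C x) i); case: (d (cos C (x + ebasis i)) j);
  case: (d (cos C (x + ebasis j)) i); case: (d (cos C x) j) => //= _;
  exact: val_inj.
Qed.

Lemma walk_dashes_shift (j : 'I_N) (s : seq 'I_N) (x : word N) :
  walk_dashes (x + ebasis j) s =
  walk_dashes x s + (size s + count_mem j s)%:R + (d (cos C x) j)%:R
    + (d (cos C (x + \sum_(i <- s) ebasis i)) j)%:R.
Proof.
elim: s x => [|i s IH] x /=.
  by rewrite big_nil !addr0 add0r addrr_F2.
rewrite addrAC IH big_cons (addrA x) dashing_square natr_negb_F2 !natrD -nat1r.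
(* [ring] does not know that 2 = 0 in 'F_2, so the duplicated term is
   cancelled by hand. *)
apply: (@F2_eq_add2r _ _ (d (cos C (x + ebasis i)) j)%:R); ring.
Qed.

End Walks.

Section Codes.
Variable N : nat.

Lemma sum_ebasis_parity_word (s : seq 'I_N) :
  \sum_(i <- s) ebasis i = parity_word s.
Proof.
apply/rowP => j; rewrite summxE !mxE -natr_F2.
elim: s => [|i s IH]; first by rewrite big_nil.
by rewrite big_cons IH /= natrD !mxE eq_sym.
Qed.

Lemma natr_wt_F2 (v : word N) : (wt v)%:R = \sum_(j < N) v 0 j.
Proof.
rewrite /wt -sum1_card natr_sum big_mkcond /=; apply: eq_bigr => j _.
by rewrite inE; case: (F2_cases (v 0 j)) => ->.
Qed.

Lemma natr_size_parity_word (s : seq 'I_N) :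
  (size s)%:R = (wt (parity_word s))%:R :> 'F_2.
Proof.
rewrite natr_wt_F2 -sum_ebasis_parity_word.
under eq_bigr do rewrite summxE.
rewrite exchange_big /=.
elim: s => [|i s IH]; first by rewrite big_nil.
rewrite big_cons -IH -nat1r (bigD1 i) //= big1 => [|j ne_ji].
  by rewrite mxE !eqxx addr0.
by rewrite mxE (negbTE ne_ji).
Qed.

Lemma cos_add_codeword (C : {set word N}) (x c : word N) :
  {in C &, forall a b, a + b \in C} -> c \in C -> cos C (x + c) = cos C x.
Proof.
move=> addC Cc; apply: val_inj => /=.
apply/setP => z; apply/imsetP/imsetP => -[c' Cc' ->].
  by exists (c + c'); [exact: addC | rewrite addrA].
by exists (c + c'); [exact: addC | rewrite addrA -(addrA x) addrr_rowF2 addr0].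
Qed.

Lemma affine_of_shifts (f : word N -> 'F_2) (p : word N) :
  (forall y j, f (y + ebasis j) = f y + p 0 j) -> forall x, f x = f 0 + ip x p.
Proof.
move=> shift x; rewrite {1}(row_sum_delta x) /ip.
apply: (big_rec2 (fun v a => f v = f 0 + a)) => [|j v a _ IH].
  by rewrite addr0.
have [-> | ->] := F2_cases (x 0 j); first by rewrite scale0r mul0r !add0r.
by rewrite scale1r mul1r addrC shift IH -addrA (addrC a).
Qed.

End Codes.

Section Diagonal.
Variables (N k : nat) (C : {set word N}) (d : qvert C -> 'I_N -> bool).
Variable s : seq 'I_N.
Hypotheses (codeC : doubly_even_code k C) (p_in_C : parity_word s \in C).
Hypothesis dashing : adinkra_dashing d.

Lemma gprod_cos_diag (x : word N) :
  gprod d s (cos C x) (cos C x) = signF2 (walk_dashes d x s).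
Proof.
case: codeC => _ addC _ _.
by rewrite gprod_cosE sum_ebasis_parity_word -[coset C _]/(val (cos C _))
  cos_add_codeword // eqxx.
Qed.

Lemma walk_dashes_ip (x : word N) :
  walk_dashes d x s = walk_dashes d 0 s + ip x (parity_word s).
Proof.
case: codeC => _ addC _ wt4.
apply: (affine_of_shifts (f := walk_dashes d ^~ s)) => y j.
have even_size : (size s)%:R = 0 :> 'F_2.
  rewrite natr_size_parity_word natr_F2.
  by have /dvdnP[m ->] := wt4 _ p_in_C; rewrite oddM andbF.
rewrite walk_dashes_shift // sum_ebasis_parity_word cos_add_codeword //.
by rewrite natrD even_size add0r -addrA addrr_F2 addr0 mxE -natr_F2.
Qed.

End Diagonal.

Theorem mainTheorem13 (N k : nat) (C : {set 'rV['F_2]_N})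
    (d : qvert C -> 'I_N -> bool) (s : seq 'I_N) :
  doubly_even_code k C ->
  adinkra_dashing d ->
  parity_word s \in C ->
  parity_word s != 0 ->
  (forall u : qvert C, gprod d s u u = 1 \/ gprod d s u u = -1) ->
  forall x y : 'rV['F_2]_N,
    gprod d s (cos C x) (cos C x) = gprod d s (cos C y) (cos C y) <->
    ip x (parity_word s) = ip y (parity_word s).
Proof.
move=> codeC dashing p_in_C _ _ x y.
have shiftE := walk_dashes_ip codeC p_in_C dashing.
rewrite !(gprod_cos_diag d codeC p_in_C) (shiftE x) (shiftE y).
by split=> [/signF2_inj/addrI | ->].
Qed.
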